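(* There exists an antipodal $3$-splitting of $Q_2^4$, and there exists an antipodal $5$-splitting of $Q_2^8$.
   Context: $Q_2^n=\{0,1\}^n$. For $0\le m\le n$, an $m$-face of $Q_2^n$ is given by a tuple $a=(a_1,\dots,a_n)\in\{0,1,*\}^n$ with exactly $m$ entries equal to $*$; it denotes the set $\{x\in Q_2^n : x_i=a_i \text{ whenever } a_i\in\{0,1\}\}$. The direction of a face is the set of positions of its asterisks; two faces are parallel if they have the same direction, and two parallel faces $a,b$ are antipodal if $b_i=1-a_i$ at every non-asterisk position $i$. For positive integers $k<n$, an antipodal $k$-splitting of $Q_2^n$ is a collection of exactly $2^k$ $(n-k)$-faces whose union is $Q_2^n$ and which contains no pair of parallel non-antipodal faces. *)

From mathcomp Require Import all_boot.
Set Implicit Arguments. Unset Strict Implicit. Unset Printing Implicit Defensive.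

Definition vertex (n : nat) := {ffun 'I_n -> bool}.

(* A face of Q_2^n : a tuple in {0,1,*}^n, encoded with None = '*',
   Some false = 0, Some true = 1. *)
Definition face (n : nat) := {ffun 'I_n -> option bool}.

Definition direction n (a : face n) : {set 'I_n} := [set i | a i == None].

Definition face_dim n (a : face n) : nat := #|direction a|.

Definition in_face n (a : face n) (x : vertex n) : bool :=
  [forall i, if a i is Some c then x i == c else true].

Definition parallel n (a b : face n) : bool := direction a == direction b.

Definition antipodal n (a b : face n) : bool :=
  parallel a b &&
  [forall i, if a i is Some c then b i == Some (~~ c) else true].

Definition antipodal_splitting (n k : nat) (S : {set face n}) : Prop :=
  [/\ 0 < k /\ k < n,
      #|S| = 2 ^ k,
      (forall a, a \in S -> face_dim a = n - k),
      (forall x : vertex n, exists2 a, a \in S & in_face a x) &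
      (forall a b, a \in S -> b \in S -> a != b -> parallel a b -> antipodal a b)].
Arguments antipodal_splitting : clear implicits.

From mathcomp Require Import all_boot.
From Stdlib Require Import String Ascii.

Set Implicit Arguments. Unset Strict Implicit. Unset Printing Implicit Defensive.

(* Both splittings are exhibited explicitly; they are closed under taking the
   antipodal face (complementing every fixed coordinate).  All defining
   conditions are finite, so they are checked by evaluation. *)

(* The checks run on lists rather than on faces: cardinals and finfun
   application are blocked by opaque proofs and do not reduce under vm_compute.
   [nth None] reads missing letters as [*], so words are also checked to have
   length [n]. *)
Definition word := seq (option bool).

Definition face_of n (w : word) : face n := [ffun i : 'I_n => nth None w i].

Definition vertex_of n (v : seq bool) : vertex n := [ffun i : 'I_n => nth false v i].

Lemma all_iota_ord n (P : pred nat) : all P (iota 0 n) = [forall i : 'I_n, P i].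
Proof.
apply/allP/forallP => [P_iota i | P_ord m].
  by apply: P_iota; rewrite mem_iota ltn_ord.
by rewrite mem_iota add0n => /andP[_ m_lt_n]; apply: (P_ord (Ordinal m_lt_n)).
Qed.

Lemma count_iota_ord n (P : pred nat) : count P (iota 0 n) = #|[pred i : 'I_n | P i]|.
Proof. by rewrite -val_enum_ord count_map -size_filter cardE enumT. Qed.

Lemma face_of_inj n : {in [pred w : word | size w == n] &, injective (face_of n)}.
Proof.
move=> u w /eqP size_u /eqP size_w /ffunP eq_uw.
apply: (@eq_from_nth _ None) => [|m]; first by rewrite size_u size_w.
by rewrite size_u => m_lt_n; have := eq_uw (Ordinal m_lt_n); rewrite !ffunE.
Qed.

Lemma vertex_of_enum n (x : vertex n) : vertex_of n [seq x i | i <- enum 'I_n] = x.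
Proof.
by apply/ffunP => i; rewrite ffunE (nth_map i) ?size_enum_ord // nth_ord_enum.
Qed.

Section WordPredicates.

Variable n : nat.
Implicit Types (u w : word) (v : seq bool).

Definition word_dim w := count (fun i => nth None w i == None) (iota 0 n).

Definition word_contains w v :=
  all (fun i => if nth None w i is Some c then nth false v i == c else true) (iota 0 n).

Definition word_parallel u w :=
  all (fun i => (nth None u i == None) == (nth None w i == None)) (iota 0 n).

Definition word_opposite u w :=
  all (fun i => if nth None u i is Some c then nth None w i == Some (~~ c) else true)
    (iota 0 n).

Lemma face_dim_of w : face_dim (face_of n w) = word_dim w.
Proof.
by rewrite /word_dim count_iota_ord; apply: eq_card => i; rewrite !inE ffunE.
Qed.

Lemma in_face_of w v : in_face (face_of n w) (vertex_of n v) = word_contains w v.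
Proof. by rewrite /word_contains all_iota_ord; apply: eq_forallb => i; rewrite !ffunE. Qed.

Lemma parallel_of u w : parallel (face_of n u) (face_of n w) = word_parallel u w.
Proof.
rewrite /parallel /word_parallel all_iota_ord.
apply/eqP/forallP => [eq_dir i | eq_stars]; last first.
  by apply/setP => i; rewrite !inE !ffunE (eqP (eq_stars i)).
by move/setP/(_ i): eq_dir; rewrite !inE !ffunE => ->.
Qed.

Lemma antipodal_of u w :
  antipodal (face_of n u) (face_of n w) = word_parallel u w && word_opposite u w.
Proof.
rewrite /antipodal parallel_of /word_opposite all_iota_ord; congr (_ && _).
by apply: eq_forallb => i; rewrite !ffunE.
Qed.

End WordPredicates.

Fixpoint bool_words n : seq (seq bool) :=
  if n is n'.+1 then [seq b :: v | b <- [:: false; true], v <- bool_words n'] else [:: [::]].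

Lemma mem_bool_words (v : seq bool) : v \in bool_words (size v).
Proof.
elim: v => [|b v IHv] //=; rewrite cats0 mem_cat.
by case: b; apply/orP; [right | left]; apply/mapP; exists v.
Qed.

Definition antipodal_splitting_words n k (ws : seq word) : bool :=
  [&& 0 < k < n, uniq ws, size ws == 2 ^ k,
      all (fun w => (size w == n) && (word_dim n w == n - k)) ws,
      all (fun v => has (fun w => word_contains n w v) ws) (bool_words n) &
      all (fun u => all (fun w =>
        (u != w) ==> word_parallel n u w ==> word_opposite n u w) ws) ws].

Lemma antipodal_splitting_of_words n k (ws : seq word) :
  antipodal_splitting_words n k ws -> antipodal_splitting n k [set a in map (face_of n) ws].
Proof.
case/and5P => /andP[k_gt0 k_lt_n] ws_uniq /eqP size_ws /allP ws_faces /andP[cover anti].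
have face_of_inj_ws : {in ws &, injective (face_of n)}.
  by move=> u w /ws_faces/andP[size_u _] /ws_faces/andP[size_w _]; apply: face_of_inj.
split=> //.
- by rewrite cardsE (card_uniqP _) ?size_map ?map_inj_in_uniq.
- by move=> a; rewrite inE => /mapP[w /ws_faces/andP[_ /eqP <-] ->]; apply: face_dim_of.
- move=> x; set v := [seq x i | i <- enum 'I_n].
  have v_word : v \in bool_words n.
    by have := mem_bool_words v; rewrite size_map size_enum_ord.
  have /hasP[w w_ws x_w] := allP cover v v_word.
  by exists (face_of n w); rewrite ?inE ?map_f // -(vertex_of_enum x) in_face_of.
- move=> a b; rewrite !inE => /mapP[u u_ws ->] /mapP[w w_ws ->] a_neq_b.
  have u_neq_w : u != w by apply: contraNneq a_neq_b => ->.
  rewrite parallel_of antipodal_of => par_uw; rewrite par_uw.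
  by have /allP/(_ w w_ws) := allP anti u u_ws; rewrite u_neq_w par_uw.
Qed.

Definition letter (c : ascii) : option bool :=
  match c with "0"%char => Some false | "1"%char => Some true | _ => None end.

Fixpoint word_of_string (s : string) : word :=
  if s is String c s' then letter c :: word_of_string s' else [::].

Local Open Scope string_scope.

Definition splitting_Q4 : seq word := map word_of_string
  [:: "00*0"; "11*1"; "100*"; "011*"; "*100"; "*011"; "1*10"; "0*01"].

Definition splitting_Q8 : seq word := map word_of_string
  [:: "**0000*0"; "**1111*1"; "*0100**0"; "*1011**1";
      "*110**00"; "*001**11"; "0**1000*"; "1**0111*";
      "10*10**0"; "01*01**1"; "11*10*0*"; "00*01*1*";
      "**0*1000"; "**1*0111"; "*0101*0*"; "*1010*1*";
      "**11100*"; "**00011*"; "**00*100"; "**11*011";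
      "0**1*100"; "1**0*011"; "1**111*0"; "0**000*1";
      "*11*0*10"; "*00*1*01"; "00*1**10"; "11*0**01";
      "1***1010"; "0***0101"; "01**1*10"; "10**0*01"].

Theorem proposition3 :
  (exists S : {set face 4}, antipodal_splitting 4 3 S) /\
  (exists S : {set face 8}, antipodal_splitting 8 5 S).
Proof.
split.
  by exists [set a in map (face_of 4) splitting_Q4]; apply/antipodal_splitting_of_words; vm_compute.
by exists [set a in map (face_of 8) splitting_Q8]; apply/antipodal_splitting_of_words; vm_compute.
Qed.
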